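(* Let $\mathbb{X},\mathbb{Y}$ be real Banach spaces, $A\subseteq\mathbb{X}$, and $T:\mathbb{X}\to\mathbb{Y}$ a bounded linear operator that preserves Birkhoff–James orthogonality at each point of $A$. Then $T$ preserves Birkhoff–James orthogonality at each point of $\overline{A}\cap\operatorname{Sm}\mathbb{X}$.
   Context: $u\perp_B v$ (Birkhoff–James orthogonality) means $\|u+\lambda v\|\ge\|u\|$ for all $\lambda\in\mathbb{R}$. $T$ preserves Birkhoff–James orthogonality at $x$ if $x\perp_B v$ implies $Tx\perp_B Tv$ for all $v\in\mathbb{X}$. For non-zero $z$, $J(z)=\{f\in\mathbb{X}^*:\|f\|=1,\ f(z)=\|z\|\}$; $z$ is smooth if $J(z)$ is a singleton, and $\operatorname{Sm}\mathbb{X}$ denotes the set of all smooth points of $\mathbb{X}$. $\overline{A}$ is the norm closure. *)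

From HB Require Import structures.
From mathcomp Require Import all_boot all_order all_algebra.
From mathcomp Require Import all_classical all_reals all_analysis.
Set Implicit Arguments. Unset Strict Implicit. Unset Printing Implicit Defensive.
Import Order.TTheory GRing.Theory Num.Theory.
Import numFieldNormedType.Exports.
Local Open Scope classical_set_scope.
Local Open Scope ring_scope.

Section Defs.
Context {R : realType}.

Definition bj_orth {X : normedModType R} (u v : X) : Prop :=
  forall lam : R, `|u| <= `|u + lam *: v|.

Definition preserves_bj_at {X Y : normedModType R} (T : X -> Y) (x : X) : Prop :=
  forall v : X, bj_orth x v -> bj_orth (T x) (T v).

Definition is_linear {X Y : normedModType R} (T : X -> Y) : Prop :=
  forall (a : R) (x y : X), T (a *: x + y) = a *: T x + T y.

Definition is_bounded {X Y : normedModType R} (T : X -> Y) : Prop :=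
  exists M : R, forall x : X, `|T x| <= M * `|x|.

Definition dual_norm {X : normedModType R} (f : X -> R) : R :=
  sup [set `|f x| | x in [set x : X | `|x| <= 1]].

Definition dual_elt {X : normedModType R} (f : X -> R) : Prop :=
  is_linear (f : X -> R^o) /\ is_bounded (f : X -> R^o).

Definition Jset {X : normedModType R} (z : X) : set (X -> R) :=
  [set f | dual_elt f /\ dual_norm f = 1 /\ f z = `|z|].

Definition smooth {X : normedModType R} (z : X) : Prop :=
  z != 0 /\ exists f : X -> R, Jset z = [set f].

Definition Sm (X : normedModType R) : set X := [set z | smooth z].

End Defs.

From HB Require Import structures.
From mathcomp Require Import all_boot all_order all_algebra.
From mathcomp Require Import all_classical all_reals all_analysis.
From mathcomp Require Import ring lra.
Import Order.TTheory GRing.Theory Num.Theory.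
Import numFieldNormedType.Exports.
Local Open Scope classical_set_scope.
Local Open Scope ring_scope.

(* If x is smooth and x _|_B v, the norm is differentiable at x in direction v
   with derivative 0: a nonzero one-sided slope would, by Hahn-Banach, yield a
   norming functional at x with nonzero value at v, besides one vanishing at v.
   Hence every norming functional F at a point y near x has |F v| small, and
   y _|_B v - (F v / |y|) y.  For y in A, T preserves this orthogonality, and
   boundedness of T lets the error vanish as y -> x. *)

Section LinearMaps.
Context {R : realType} {X Y : normedModType R} {T : X -> Y}.
Hypothesis linT : is_linear T.

Lemma is_linear0 : T 0 = 0.
Proof.
have := linT 1 0 0; rewrite scale1r addr0 scale1r => T00.
by apply: (addrI (T 0)); rewrite addr0 -T00.
Qed.

Lemma is_linearZ a x : T (a *: x) = a *: T x.
Proof. by rewrite -[a *: x]addr0 linT is_linear0 addr0. Qed.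

Lemma is_linearB x y : T (x - y) = T x - T y.
Proof. by rewrite addrC -scaleN1r linT scaleN1r addrC. Qed.

End LinearMaps.

Section HahnBanach.
Context {R : realType} {X : normedModType R}.

(* The graph of a linear functional on a subspace of X, dominated by the norm. *)
Definition dominated_graph (G : set (X * R)) :=
  [/\ G (0, 0),
      (forall (a : R) u w, G u -> G w -> G (a *: u.1 + w.1, a * u.2 + w.2)) &
      (forall u, G u -> u.2 <= `|u.1|)].

Lemma dominated_graphZ G a u : dominated_graph G -> G u -> G (a *: u.1, a * u.2).
Proof. by move=> [G0 GC _] Gu; have := GC a u (0, 0) Gu G0; rewrite /= !addr0. Qed.

Lemma dominated_graph_fun {G y r r'} : dominated_graph G ->
  G (y, r) -> G (y, r') -> r = r'.
Proof.
move=> [_ GC GD] Gr Gr'.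
have := GD _ (GC (-1) _ _ Gr Gr'); rewrite /= scaleN1r addNr normr0.
have := GD _ (GC (-1) _ _ Gr' Gr); rewrite /= scaleN1r addNr normr0.
lra.
Qed.

Section OneStepExtension.
Variables (G : set (X * R)) (y0 : X).
Hypothesis domG : dominated_graph G.

Lemma dominated_graph_gap u w : G u -> G w ->
  u.2 - `|u.1 - y0| <= `|w.1 + y0| - w.2.
Proof.
case: domG => _ GC GD Gu Gw.
have := GD _ (GC 1 _ _ Gu Gw); rewrite /= scale1r mul1r.
have := ler_normD (u.1 - y0) (w.1 + y0); rewrite addrACA addNr addr0.
lra.
Qed.

(* Admissible values c for the extension at y0 lie between the two sides of
   [dominated_graph_gap]; we take the supremum of the left-hand sides. *)
Definition graph_extension (c : R) : set (X * R) :=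
  [set w | exists u t, G u /\ w = (u.1 + t *: y0, u.2 + t * c)].

Section Bounds.
Variable c : R.
Hypothesis c_lb : forall u, G u -> u.2 - `|u.1 - y0| <= c.
Hypothesis c_ub : forall u, G u -> c <= `|u.1 + y0| - u.2.

(* Rescale u by t^-1 to reduce to the two bounds on c. *)
Lemma graph_extension_pos u t : G u -> 0 < t ->
  u.2 + t * c <= `|u.1 + t *: y0| /\ u.2 - t * c <= `|u.1 - t *: y0|.
Proof.
move=> Gu t0; have Gu' := @dominated_graphZ G t^-1 u domG Gu.
have ub := c_ub _ Gu'; have lb := c_lb _ Gu'; rewrite /= in ub lb.
have tV : t * t^-1 = 1 by rewrite mulfV ?gt_eqF.
have unscale s : u.1 + t *: s = t *: (t^-1 *: u.1 + s).
  by rewrite scalerDr scalerA tV scale1r.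
rewrite -(scalerN t y0) !unscale !normrZ gtr0_norm //.
have := ler_wpM2l (ltW t0) ub; have := ler_wpM2l (ltW t0) lb.
rewrite !mulrBr !mulrA tV !mul1r.
split; lra.
Qed.

Lemma graph_extension_dominated : dominated_graph (graph_extension c).
Proof.
case: domG => G0 GC GD; split.
- by exists (0, 0), 0; split => //; rewrite /= scale0r mul0r !addr0.
- move=> a _ _ [u1 [t1 [G1 ->]]] [u2 [t2 [G2 ->]]].
  exists (a *: u1.1 + u2.1, a * u1.2 + u2.2), (a * t1 + t2); split; first exact: GC.
  by rewrite /= scalerDr scalerA scalerDl addrACA; congr (_, _); lra.
- move=> _ [u [t [Gu ->]]] /=.
  have [t0|t0|->] := ltgtP t 0; last by rewrite scale0r mul0r !addr0; exact: GD.
    have [|_] := graph_extension_pos u (- t) Gu; first by rewrite oppr_gt0.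
    by rewrite scaleNr opprK mulNr opprK.
  by have [] := graph_extension_pos u t Gu t0.
Qed.

End Bounds.

Lemma dominated_graph_extend :
  exists G', [/\ dominated_graph G', G `<=` G' & exists r, G' (y0, r)].
Proof.
pose S := [set u.2 - `|u.1 - y0| | u in G].
have supS : has_sup S.
  case: domG => G0 _ _; split; first by exists (0 - `|0 - y0|), (0, 0).
  exists (`|0 + y0| - 0) => _ [u Gu <-]; exact: (dominated_graph_gap u (0, 0)).
exists (graph_extension (sup S)); split.
- apply: graph_extension_dominated => u Gu.
    by apply: sup_upper_bound => //; exists u.
  by apply: ge_sup; [case: supS | move=> _ [w Gw <-]; exact: dominated_graph_gap].
- by move=> u Gu; exists u, 0; split => //; rewrite scale0r mul0r !addr0; case: u Gu.
- exists (sup S), (0, 0), 1; split; first by case: domG.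
  by rewrite /= add0r scale1r mul1r add0r.
Qed.

End OneStepExtension.

Lemma dominated_graph_chain {G0 : set (X * R)} {F : set (set (X * R))} :
  dominated_graph G0 -> total_on F subset ->
  (forall G, F G -> dominated_graph (G0 `|` G)) ->
  dominated_graph (G0 `|` \bigcup_(G in F) G).
Proof.
move=> domG0 Ftot domF; pose U := G0 `|` \bigcup_(G in F) G.
have common u w : U u -> U w ->
    exists G, [/\ dominated_graph G, G `<=` U, G u & G w].
  have sub G : F G -> G0 `|` G `<=` U.
    by move=> FG z [G0z|Gz]; [left|right; exists G].
  case=> [G0u|[G1 FG1 G1u]] [G0w|[G2 FG2 G2w]].
  - by exists G0; split => // z; left.
  - by exists (G0 `|` G2); split; [exact: domF|exact: sub|left|right].
  - by exists (G0 `|` G1); split; [exact: domF|exact: sub|right|left].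
  - have [G12|G21] := Ftot _ _ FG1 FG2.
      by exists (G0 `|` G2); split; [exact: domF|exact: sub|right; apply: G12|right].
    by exists (G0 `|` G1); split; [exact: domF|exact: sub|right|right; apply: G21].
split.
- by left; case: domG0.
- move=> a u w Uu Uw; have [G [[_ GC _] GU Gu Gw]] := common u w Uu Uw.
  exact/GU/GC.
- move=> u Uu; have [G [[_ _ GD] _ Gu _]] := common u u Uu Uu; exact: GD.
Qed.

Theorem hahn_banach_graph {G0 : set (X * R)} : dominated_graph G0 ->
  exists F : X -> R, [/\ is_linear (F : X -> R^o), forall y, F y <= `|y|
    & forall u, G0 u -> F u.1 = u.2].
Proof.
move=> domG0.
(* Zorn ranges over the G with G0 `|` G dominated, so the empty chain is allowed. *)
have [A [domA Amax]] :=
  @Zorn_bigcup _ (fun G => dominated_graph (G0 `|` G))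
    (fun F FP Ftot => dominated_graph_chain domG0 Ftot FP).
pose M := G0 `|` A.
have M_total y : exists r, M (y, r).
  have [G' [domG' MG' [r G'y]]] := dominated_graph_extend _ y domA.
  exists r; right; apply: contrapT => nAy; apply: (Amax G').
    by split=> [z Az|G'A]; [apply: MG'; right|apply/nAy/G'A].
  by rewrite (_ : G0 `|` G' = G') // setUidr // => z G0z; apply: MG'; left.
have [F MF] := choice M_total.
exists F; split.
- move=> a y z; apply: (dominated_graph_fun domA (MF _)).
  by case: domA => _ GC _; exact: (GC a _ _ (MF y) (MF z)).
- by move=> y; case: domA => _ _ GD; exact: GD (MF y).
- by move=> [y r] G0y; apply: (dominated_graph_fun domA (MF y)); left.
Qed.

End HahnBanach.

Section SupportFunctionals.
Context {R : realType} {X : normedModType R}.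

Definition norm_dominated (F : X -> R) :=
  is_linear (F : X -> R^o) /\ forall y, F y <= `|y|.

Lemma norm_dominated_extension {x v : X} {c : R} :
  (forall s, `|x| + c * s <= `|x + s *: v|) ->
  exists F, [/\ norm_dominated F, F x = `|x| & F v = c].
Proof.
move=> hxv.
pose G0 := [set w : X * R | exists a b : R, w = (a *: x + b *: v, a * `|x| + b * c)].
have cv s : c * s <= `|s *: v|.
  by have := hxv s; have := ler_normD x (s *: v); lra.
have domG0 : dominated_graph G0.
  split.
  - by exists 0, 0; rewrite !scale0r !mul0r !addr0.
  - move=> k _ _ [a1 [b1 ->]] [a2 [b2 ->]] /=.
    exists (k * a1 + a2), (k * b1 + b2); congr (_, _); last by lra.
    by rewrite scalerDr !scalerA addrACA -!scalerDl.
  - move=> _ [a [b ->]] /=; have [a0|a0] := ltP 0 a.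
      have -> : a *: x + b *: v = a *: (x + (b / a) *: v).
        by rewrite scalerDr scalerA mulrCA mulfV ?gt_eqF // mulr1.
      rewrite normrZ gtr0_norm //.
      have := ler_wpM2l (ltW a0) (hxv (b / a)).
      rewrite mulrDr (_ : a * (c * (b / a)) = b * c); first lra.
      by field; rewrite gt_eqF.
    have := ler_normD (a *: x + b *: v) (- (a *: x)).
    rewrite addrAC subrr add0r normrN [`|a *: x|]normrZ ler0_norm //.
    by have := cv b; lra.
have [F [linF domF FG0]] := hahn_banach_graph domG0.
exists F; split => //.
- by apply: (FG0 (x, `|x|)); exists 1, 0; rewrite scale1r scale0r addr0 mul1r mul0r addr0.
- by apply: (FG0 (v, c)); exists 0, 1; rewrite scale1r scale0r add0r mul1r mul0r add0r.
Qed.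

Lemma norming_exists (y : X) : exists F, norm_dominated F /\ F y = `|y|.
Proof.
have [|F [domF Fy _]] := @norm_dominated_extension y 0 0; last by exists F.
by move=> s; rewrite mul0r addr0 scaler0 addr0.
Qed.

Lemma norm_dominated_norm {F} y : norm_dominated F -> `|F y| <= `|y|.
Proof.
move=> [linF domF]; have FN : F (- y) = - F y.
  by have := is_linearB linF 0 y; rewrite is_linear0 // !sub0r.
by rewrite ler_norml domF andbT; have := domF (- y); rewrite FN normrN; lra.
Qed.

Lemma norm_dominated_J {y F} : y != 0 -> norm_dominated F -> F y = `|y| -> Jset y F.
Proof.
move=> y0 domF Fy; have [linF _] := domF.
have normF z : `|F z| <= `|z| := norm_dominated_norm z domF.
split; [split|split] => //; first by exists 1 => z; rewrite mul1r.
have ny : 0 < `|y| by rewrite normr_gt0.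
pose S := [set `|F z| | z in [set z : X | `|z| <= 1]].
have supS : has_sup S.
  split; first by exists `|F 0|, 0 => //=; rewrite normr0.
  by exists 1 => _ [z /= z1 <-]; apply: le_trans (normF z) z1.
apply/eqP; rewrite eq_le; apply/andP; split.
  by apply: ge_sup; [case: supS | move=> _ [z /= z1 <-]; apply: le_trans (normF z) z1].
apply: sup_upper_bound => //; exists (`|y|^-1 *: y).
  by rewrite /= normrZ normrV ?unitfE ?gt_eqF // normr_id mulVf ?gt_eqF.
by rewrite (is_linearZ linF) Fy -[_ *: _]/(`|y|^-1 * `|y|) mulVf ?gt_eqF // normr1.
Qed.

End SupportFunctionals.

Section Smoothness.
Context {R : realType} {X : normedModType R}.
Implicit Types (x y v : X) (F : X -> R).

Lemma bj_orthN {x v} : bj_orth x v -> bj_orth x (- v).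
Proof. by move=> xv lam; rewrite scalerN -scaleNr. Qed.

Lemma smooth_norming_unique {x F1 F2} : smooth x ->
  norm_dominated F1 -> F1 x = `|x| -> norm_dominated F2 -> F2 x = `|x| -> F1 = F2.
Proof.
move=> [x0 [f Jf]] dom1 F1x dom2 F2x.
have := norm_dominated_J x0 dom1 F1x; have := norm_dominated_J x0 dom2 F2x.
by rewrite Jf => -> ->.
Qed.

(* Otherwise Hahn-Banach yields norming functionals at x with values e and 0 at v. *)
Lemma smooth_norm_slope {x v e} : smooth x -> bj_orth x v -> 0 < e ->
  exists2 t, 0 < t & `|x + t *: v| < `|x| + e * t.
Proof.
move=> smx xv e0; apply: contrapT => nslope.
have slope_e s : `|x| + e * s <= `|x + s *: v|.
  have [s0|s0] := ltP 0 s; last by have := xv s; nra.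
  by rewrite leNgt; apply/negP => lt; apply: nslope; exists s.
have slope_0 s : `|x| + 0 * s <= `|x + s *: v| by rewrite mul0r addr0; exact: xv.
have [Fe [dome Fex Fev]] := norm_dominated_extension slope_e.
have [F0 [dom0 F0x F0v]] := norm_dominated_extension slope_0.
have := smooth_norming_unique smx dome Fex dom0 F0x.
by move/(congr1 (fun F => F v)); rewrite Fev F0v => e_eq0; rewrite e_eq0 ltxx in e0.
Qed.

Lemma norming_slope_le {y F} x v t : norm_dominated F -> F y = `|y| ->
  t * F v <= `|x + t *: v| - `|x| + 2 * `|x - y|.
Proof.
move=> [linF domF] Fy; have := domF (t *: v + y).
rewrite linF Fy -[_ *: F v]/(t * F v).
have : `|t *: v + y| <= `|x + t *: v| + `|x - y|.
  by rewrite distrC -{1}(subrKC x y) addrCA addrA ler_normD.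
have := ler_normD (x - y) y; rewrite subrK.
lra.
Qed.

Lemma norming_near_smooth {x v e} : smooth x -> bj_orth x v -> 0 < e ->
  exists2 d, 0 < d & forall y F, `|x - y| < d ->
    norm_dominated F -> F y = `|y| -> `|F v| <= e.
Proof.
move=> smx xv e0; have e20 : 0 < e / 2 by rewrite divr_gt0.
have [t t0 slope_t] := smooth_norm_slope smx xv e20.
have [s s0 slope_s] := smooth_norm_slope smx (bj_orthN xv) e20.
exists (Num.min (e * t / 4) (e * s / 4)).
  by rewrite lt_min !divr_gt0 ?mulr_gt0.
move=> y F; rewrite lt_min => /andP[dt ds] domF Fy.
have := norming_slope_le x v t domF Fy.
have := norming_slope_le x v (- s) domF Fy; rewrite scaleNr -scalerN.
move=> bs bt; rewrite ler_norml; apply/andP; split.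
  by rewrite lerNl -(ler_pM2l s0); lra.
by rewrite -(ler_pM2l t0); lra.
Qed.

Lemma norming_orth {y F} v : norm_dominated F -> F y = `|y| ->
  bj_orth y (v - (F v / `|y|) *: y).
Proof.
move=> [linF domF] Fy lam; have [->|y0] := eqVneq y 0; first by rewrite normr0.
have FZ : forall a z, F (a *: z) = a * F z := is_linearZ linF.
have FB : forall z w, F (z - w) = F z - F w := is_linearB linF.
have := domF (y + lam *: (v - (F v / `|y|) *: y)).
rewrite addrC linF -[lam *: _]/(lam * _) FB FZ Fy divfK ?normr_eq0 //.
by rewrite subrr mulr0 add0r.
Qed.

End Smoothness.

Lemma is_bounded_nonneg {R : realType} {X Y : normedModType R} (T : X -> Y) :
  is_bounded T -> exists2 M, 0 <= M & forall x, `|T x| <= M * `|x|.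
Proof.
case=> M HM; exists (Num.max M 0) => [|x]; first by rewrite le_max lexx orbT.
by apply: le_trans (HM x) _; rewrite ler_wpM2r // le_max lexx.
Qed.

Lemma closure_normP {R : realType} {X : normedModType R} {A : set X} {x d} :
  closure A x -> 0 < d -> exists2 y, A y & `|x - y| < d.
Proof.
move=> clx d0; have [y [Ay]] := clx _ (nbhsx_ballx x d d0).
by rewrite -ball_normE /ball_ /= => xy; exists y.
Qed.

Lemma bj_orth_subZ_le {R : realType} {Y : normedModType R} {a b : Y} {k} lam :
  bj_orth a (b - k *: a) -> `|a| <= `|a + lam *: b| + `|lam| * `|k| * `|a|.
Proof.
move=> ab; apply: le_trans (ab lam) _.
by rewrite scalerBr addrA scalerA -normrM -normrZ ler_normB.
Qed.

Section BoundedOperator.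
Context {R : realType} {X Y : normedModType R} {T : X -> Y} {M : R}.
Hypotheses (linT : is_linear T) (M0 : 0 <= M) (boundT : forall x, `|T x| <= M * `|x|).

Lemma preserves_bj_norming_le {y F} v lam x : preserves_bj_at T y ->
  norm_dominated F -> F y = `|y| ->
  `|T x| <= `|T x + lam *: T v| + 2 * M * `|x - y| + `|lam| * M * `|F v|.
Proof.
move=> presTy domF Fy; pose k := F v / `|y|.
have := presTy _ (norming_orth v domF Fy).
rewrite (is_linearB linT) (is_linearZ linT) -/k => /(bj_orth_subZ_le lam) Ty_le.
have kTy : `|k| * `|T y| <= M * `|F v|.
  have [->|y0] := eqVneq y 0; first by rewrite (is_linear0 linT) normr0 mulr0 mulr_ge0.
  apply: le_trans (ler_wpM2l (normr_ge0 k) (boundT y)) _.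
  by rewrite mulrCA -(normr_id y) -normrM divfK ?normr_eq0.
have Tyv_le : `|T y + lam *: T v| <= `|T x + lam *: T v| + M * `|x - y|.
  rewrite (_ : T y + _ = T x + lam *: T v - (T x - T y)); last first.
    by rewrite opprB [RHS]addrC [RHS]addrA subrK.
  by apply: le_trans (ler_normB _ _) _; rewrite lerD2l -(is_linearB linT).
have Tx_le : `|T x| <= `|T y| + M * `|x - y|.
  rewrite -{1}(subrKC (T y) (T x)) -(is_linearB linT).
  by apply: le_trans (ler_normD _ _) _; rewrite lerD2l.
have := ler_wpM2l (normr_ge0 lam) kTy.
lra.
Qed.

End BoundedOperator.

Theorem mainTheorem2 (R : realType) (X Y : completeNormedModType R)
  (A : set X) (T : X -> Y) :
  is_linear T -> is_bounded T ->
  (forall x, A x -> preserves_bj_at T x) ->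
  forall x, (closure A `&` @Sm R X) x -> preserves_bj_at T x.
Proof.
move=> linT /is_bounded_nonneg[M M0 boundT] presA x [clx smx] v xv lam.
apply/ler_addgt0Pr => e e0.
pose K := 2 * M + `|lam| * M + 1.
have K0 : 0 < K by rewrite /K; have := normr_ge0 lam; nra.
pose eta := e / K.
have eta0 : 0 < eta by rewrite divr_gt0.
have etaK : eta * K = e by rewrite divfK ?gt_eqF.
have [d d0 Fv_small] := norming_near_smooth smx xv eta0.
have [|y Ay] := closure_normP (d := Num.min d eta) clx; first by rewrite lt_min d0.
rewrite lt_min => /andP[xyd xye].
have [F [domF Fy]] := norming_exists y.
have Fv := Fv_small y F xyd domF Fy.
have := preserves_bj_norming_le linT M0 boundT v lam x (presA y Ay) domF Fy.
have := ler_wpM2l M0 (ltW xye).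
have := ler_wpM2l (mulr_ge0 (normr_ge0 lam) M0) Fv.
rewrite /K in etaK; lra.
Qed.
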